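(* Let $n\ge2$ and let $\xi_n:S^1\to M_n(\mathbb C)$ be the continuous function whose $(i,j)$ entry ($1\le i,j\le n$) is $\xi_n(z)_{ij}=z^{j-i}$. Then $\xi_n$ is a positive element of $C(S^1)^{(n)}\otimes_{\min}C(S^1)$ which is entangled: there do not exist $k\in\mathbb N$, positive semidefinite Toeplitz matrices $t_1,\dots,t_k\in C(S^1)^{(n)}$ and positive functions $f_1,\dots,f_k\in C(S^1)$ with $\xi_n=\sum_{j=1}^k t_j\otimes f_j$.
   Context: $S^1$ is the unit circle, $C(S^1)$ the C$^*$-algebra of continuous complex functions on it. $C(S^1)^{(n)}\subseteq M_n(\mathbb C)$ is the operator system of Toeplitz matrices $[\tau_{k-\ell}]$. $C(S^1)^{(n)}\otimes_{\min}C(S^1)$ is identified with the continuous functions $S^1\to C(S^1)^{(n)}$, with $t\otimes f$ corresponding to $z\mapsto f(z)t$, and an element is positive iff its value at each $z\in S^1$ is positive semidefinite. A positive element is separable if it is a finite sum of tensors of positive elements, and entangled otherwise. *)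

From HB Require Import structures.
From mathcomp Require Import all_boot all_order all_algebra.
From mathcomp Require Import reals.
From mathcomp.real_closed Require Import complex.
Set Implicit Arguments. Unset Strict Implicit. Unset Printing Implicit Defensive.
Import Order.TTheory GRing.Theory Num.Theory.
Local Open Scope ring_scope.

Definition S1 {R : realType} (z : R[i]) : Prop := `|z| = 1.

Definition cont_S1 {R : realType} (f : R[i] -> R[i]) : Prop :=
  forall z, S1 z -> forall e : R[i], 0 < e ->
    exists2 d : R[i], 0 < d &
      forall w, S1 w -> `|w - z| < d -> `|f w - f z| < e.

Definition mxcont_S1 {R : realType} (n : nat) (F : R[i] -> 'M[R[i]]_n) : Prop :=
  forall i j : 'I_n, cont_S1 (fun z => F z i j).

Definition toeplitz {R : realType} (n : nat) (A : 'M[R[i]]_n) : Prop :=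
  exists tau : int -> R[i], forall k l : 'I_n, A k l = tau (k%:Z - l%:Z).

Definition psd {R : realType} (n : nat) (A : 'M[R[i]]_n) : Prop :=
  (forall k l : 'I_n, A l k = (A k l)^*) /\
  forall v : 'cV[R[i]]_n,
    0 <= \sum_(k < n) \sum_(l < n) (v k 0)^* * A k l * v l 0.

Definition xi {R : realType} (n : nat) (z : R[i]) : 'M[R[i]]_n :=
  \matrix_(i < n, j < n) z ^ (j%:Z - i%:Z).

From HB Require Import structures.
From mathcomp Require Import all_boot all_order all_algebra.
From mathcomp Require Import reals.
From mathcomp.real_closed Require Import complex.
From mathcomp Require Import ring.
Import Order.TTheory GRing.Theory Num.Theory.
Local Open Scope ring_scope.
Set Implicit Arguments. Unset Strict Implicit.

(* Suppose xi_n = sum_j f_j (x) t_j with t_j positive Toeplitz and f_j >= 0, and let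
   [[a_j, b_j], [b_j^*, a_j]] be the upper left 2x2 corner of t_j. At a point z of
   the circle, sum_j f_j(z) a_j = 1 and sum_j f_j(z) b_j = z. Positivity of the
   corners makes every 2 a_j - z^* b_j - b_j^* z nonnegative, while their
   f(z)-weighted sum is 2 - 1 - 1 = 0; so whenever f_j(z) <> 0 we are in the
   equality case of |b_j| <= a_j, namely b_j = a_j z. Thus every z on the circle is
   b_j / a_j for some index j with f_j(z) a_j <> 0: impossible, as there are
   infinitely many such z and only finitely many j. Positivity of xi_n itself holds
   because xi_n(z) is the Gram matrix of 1, z, ..., z^(n-1). *)

Lemma sum_support2 (V : nmodType) (I : finType) (i0 i1 : I) (F : I -> V) :
  i0 != i1 -> (forall i, i != i0 -> i != i1 -> F i = 0) ->
  \sum_i F i = F i0 + F i1.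
Proof.
move=> i01 F0; rewrite (bigD1 i0) //= (bigD1 i1) 1?eq_sym //= big1 ?addr0 //.
by move=> i /andP[ne1 ne0]; apply: F0.
Qed.

Section UnitCircle.
Variable C : numClosedFieldType.
Implicit Types (z w : C).

Lemma mul_conjC_unit z : `|z| = 1 -> z * z^* = 1.
Proof. by move=> z1; rewrite -normCK z1 expr1n. Qed.

Lemma unit_neq0 z : `|z| = 1 -> z != 0.
Proof. by move=> z1; rewrite -normr_eq0 z1 oner_neq0. Qed.

Lemma conjC_unit z : `|z| = 1 -> z^* = z^-1.
Proof.
by move=> z1; apply: (mulfI (unit_neq0 z1)); rewrite mul_conjC_unit ?divff ?unit_neq0.
Qed.

Lemma normrX_unit z p : `|z| = 1 -> `|z ^+ p| = 1.
Proof. by move=> z1; rewrite normrX z1 expr1n. Qed.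

Lemma conjC_exprz_unit z m : `|z| = 1 -> (z ^ m)^* = z ^ (- m).
Proof.
move=> z1; rewrite rmorphXz ?unitfE ?unit_neq0 //=.
by rewrite conjC_unit // exprz_inv.
Qed.

Lemma exprn_unit_lipschitz z w p : `|z| = 1 -> `|w| = 1 ->
  `|w ^+ p - z ^+ p| <= p%:R * `|w - z|.
Proof.
move=> z1 w1; elim: p => [|p IHp]; first by rewrite subrr normr0 mul0r.
have -> : w ^+ p.+1 - z ^+ p.+1 = w * (w ^+ p - z ^+ p) + (w - z) * z ^+ p.
  by rewrite !exprS; ring.
apply: le_trans (ler_normD _ _) _.
by rewrite !normrM w1 normrX_unit // mul1r mulr1 mulrSr mulrDl mul1r lerD2r.
Qed.

(* On the unit circle [z ^ (- p) = (z ^+ p)^*]: negative exponents reduce to positive ones. *)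
Lemma exprz_unit_lipschitz z w m : `|z| = 1 -> `|w| = 1 ->
  `|w ^ m - z ^ m| <= (absz m)%:R * `|w - z|.
Proof.
move=> z1 w1; case: m => p; first by rewrite -!exprnP exprn_unit_lipschitz.
rewrite NegzE -!exprnN -!conjC_unit ?normrX_unit // -rmorphB norm_conjC.
exact: exprn_unit_lipschitz.
Qed.

Definition cayley (m : nat) : C := (1 + m%:R * 'i) / (1 - m%:R * 'i).

Lemma cayley_den_neq0 m : 1 - m%:R * 'i != 0 :> C.
Proof.
apply: contraTneq isT => den0.
have : (1 - m%:R * 'i) * (1 + m%:R * 'i) = (1 + m * m)%:R :> C.
  have -> : (1 - m%:R * 'i) * (1 + m%:R * 'i) = 1 - m%:R * m%:R * 'i ^+ 2 :> C by ring.
  by rewrite sqrCi mulrN1 opprK natrD natrM.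
by rewrite den0 mul0r => /eqP; rewrite eq_sym pnatr_eq0.
Qed.

Lemma cayley_norm m : `|cayley m| = 1.
Proof.
have conj_den : (1 - m%:R * 'i)^* = 1 + m%:R * 'i :> C.
  by rewrite rmorphB rmorphM rmorph1 /= conjC_nat conjCi mulrN opprK.
rewrite normf_div -conj_den norm_conjC divff // normr_eq0.
exact: cayley_den_neq0.
Qed.

Lemma cayley_inj : injective cayley.
Proof.
move=> m m' /eqP; rewrite eqr_div ?cayley_den_neq0 // => /eqP eq_cross.
have : 2 * (m%:R - m'%:R) * 'i = 0 :> C.
  by rewrite -[RHS](subrr ((1 + m%:R * 'i) * (1 - m'%:R * 'i))) {2}eq_cross; ring.
move/eqP; rewrite !mulf_eq0 (negbTE (neq0Ci C)) pnatr_eq0 orbF subr_eq0 eqr_nat.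
by move/eqP.
Qed.

Lemma unit_circle_pigeonhole k (P : 'I_k -> C -> Prop) :
  (forall z, `|z| = 1 -> exists j, P j z) ->
  exists j z z', [/\ `|z| = 1, `|z'| = 1, z != z', P j z & P j z'].
Proof.
move=> P_cover.
have [g Pg] := fin_all_exists (fun m : 'I_k.+1 => P_cover _ (cayley_norm m)).
have /injectivePn[m [m' m_neq_m' g_eq]] : ~~ injectiveb g.
  by apply/injectiveP => /leq_card; rewrite !card_ord ltnn.
exists (g m), (cayley m), (cayley m'); split; try exact: cayley_norm.
- by rewrite (inj_eq (@cayley_inj)).
- exact: Pg.
- by rewrite g_eq; apply: Pg.
Qed.

Definition psd2_toeplitz (a b : C) : Prop :=
  forall x y, 0 <= x^* * a * x + x^* * b * y + y^* * b^* * x + y^* * a * y.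

Section Psd2.
Variables a b : C.
Hypothesis psd_ab : psd2_toeplitz a b.

Lemma psd2_diag_ge0 : 0 <= a.
Proof.
by have := psd_ab 1 0; rewrite rmorph1 rmorph0 !(mul0r, mulr0, mul1r, mulr1, addr0).
Qed.

Lemma psd2_unit_ge0 z : `|z| = 1 -> 0 <= 2 * a - z^* * b - b^* * z.
Proof.
move=> z1; have := psd_ab z (-1).
have -> : z^* * a * z + z^* * b * -1 + (-1)^* * b^* * z + (-1)^* * a * -1
    = 2 * a - z^* * b - b^* * z + a * (z * z^* - 1).
  by rewrite rmorphN1; ring.
by rewrite mul_conjC_unit // subrr mulr0 addr0.
Qed.

Lemma psd2_offdiag_le : b * b^* <= a * a.
Proof.
have ac : a^* = a := geC0_conj psd2_diag_ge0.
have [a0 | a_neq0] := eqVneq a 0.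
  have := psd_ab b (-1); rewrite a0.
  have -> : b^* * 0 * b + b^* * b * -1 + (-1)^* * b^* * b + (-1)^* * 0 * -1
      = - (2 * (b * b^*)) by rewrite rmorphN1; ring.
  by rewrite oppr_ge0 pmulr_rle0 // mulr0.
have := psd_ab b (- a).
have -> : b^* * a * b + b^* * b * - a + (- a)^* * b^* * b + (- a)^* * a * - a
    = a * (a * a - b * b^*) by rewrite rmorphN /= ac; ring.
have a_gt0 : 0 < a by rewrite lt_def a_neq0 psd2_diag_ge0.
by rewrite pmulr_rge0 // subr_ge0.
Qed.

Lemma psd2_unit_eq z : `|z| = 1 -> 2 * a - z^* * b - b^* * z = 0 -> b = a * z.
Proof.
move=> z1 eq0; have ac : a^* = a := geC0_conj psd2_diag_ge0.
have norm_diff : (b - a * z) * (b - a * z)^* = b * b^* - a * a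
    + a * a * (z * z^* - 1) + a * (2 * a - z^* * b - b^* * z).
  by rewrite rmorphB rmorphM /= ac; ring.
rewrite (mul_conjC_unit z1) eq0 subrr !mulr0 !addr0 in norm_diff.
apply/eqP; rewrite -subr_eq0 -mul_conjC_eq0 eq_le mul_conjC_ge0 andbT norm_diff.
by rewrite subr_le0 psd2_offdiag_le.
Qed.

End Psd2.

Lemma psd2_mixture_unit (I : finType) (w a b : I -> C) z : `|z| = 1 ->
  (forall i, 0 <= w i) -> (forall i, psd2_toeplitz (a i) (b i)) ->
  \sum_i w i * a i = 1 -> \sum_i w i * b i = z ->
  forall i, w i != 0 -> b i = a i * z.
Proof.
move=> z1 w_ge0 psd_ab sum_a sum_b i wi_neq0.
apply: (psd2_unit_eq (psd_ab i) z1).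
pose d j := 2 * a j - z^* * b j - (b j)^* * z.
have wd_ge0 j : 0 <= w j * d j by rewrite mulr_ge0 ?psd2_unit_ge0.
have sum_wd : \sum_j w j * d j = 0.
  have sum_bc : \sum_j w j * (b j)^* = z^*.
    rewrite -sum_b rmorph_sum; apply: eq_bigr => j _.
    by rewrite rmorphM /= (geC0_conj (w_ge0 j)).
  transitivity (2 * (\sum_j w j * a j) - z^* * (\sum_j w j * b j)
                - z * (\sum_j w j * (b j)^*)).
    by rewrite !mulr_sumr -!sumrB; apply: eq_bigr => j _; rewrite /d; ring.
  by rewrite sum_a sum_b sum_bc (mulrC z^*) mul_conjC_unit //; ring.
have /eqP := psumr_eq0P (fun j _ => wd_ge0 j) sum_wd (i := i) isT.
by rewrite mulf_eq0 (negbTE wi_neq0) => /eqP.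
Qed.

End UnitCircle.

Section ToeplitzMatrices.
Variable R : realType.
Local Notation C := R[i].
Implicit Types z w : C.

Lemma lipschitz_cont_S1 (f : C -> C) (L : C) : 0 <= L ->
  (forall z w, S1 z -> S1 w -> `|f w - f z| <= L * `|w - z|) -> cont_S1 f.
Proof.
move=> L_ge0 f_lip z z1 e e_gt0.
have L1_gt0 : 0 < L + 1 by rewrite ltr_wpDl.
exists (e / (L + 1)) => [|w w1]; first by rewrite divr_gt0.
rewrite ltr_pdivlMr // => lt_e.
apply: le_lt_trans (f_lip z w z1 w1) (le_lt_trans _ lt_e).
by rewrite mulrC ler_wpM2l ?lerDl.
Qed.

Lemma psd_gram n (u : 'I_n -> C) : psd (\matrix_(k, l) ((u k)^* * u l)).
Proof.
split=> [k l|v]; first by rewrite !mxE rmorphM /= conjCK mulrC.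
pose s := \sum_l u l * v l 0.
have -> : \sum_k \sum_l (v k 0)^* * (\matrix_(k, l) ((u k)^* * u l)) k l * v l 0
    = s^* * s.
  rewrite rmorph_sum mulr_suml; apply: eq_bigr => k _.
  rewrite mulr_sumr; apply: eq_bigr => l _; rewrite mxE rmorphM /=; ring.
by rewrite mulrC mul_conjC_ge0.
Qed.

Lemma psd_toeplitz_corner n (A : 'M[C]_n) (i0 i1 : 'I_n) : i0 != i1 ->
  toeplitz A -> psd A -> psd2_toeplitz (A i0 i0) (A i0 i1).
Proof.
move=> i01 [tau A_tau] [A_herm A_form] x y.
pose v : 'cV[C]_n := \col_k (if k == i0 then x else if k == i1 then y else 0).
have v0 k : k != i0 -> k != i1 -> v k 0 = 0.
  by move=> /negbTE k0 /negbTE k1; rewrite mxE k0 k1.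
have row k : \sum_l (v k 0)^* * A k l * v l 0
    = (v k 0)^* * A k i0 * v i0 0 + (v k 0)^* * A k i1 * v i1 0.
  by apply: sum_support2 => // l l0 l1; rewrite (v0 l) // mulr0.
have := A_form v; rewrite (sum_support2 i01) => [|k k0 k1]; last first.
  by rewrite big1 // => l _; rewrite v0 // conjC0 !mul0r.
have A11 : A i1 i1 = A i0 i0 by rewrite !A_tau !subrr.
rewrite !row !mxE eqxx eq_sym (negbTE i01) eqxx A11 (A_herm i0 i1).
by rewrite !addrA.
Qed.

Lemma xi_cont n : mxcont_S1 (@xi R n).
Proof.
move=> k l; apply: (@lipschitz_cont_S1 _ (absz (l%:Z - k%:Z))%:R) => // z w z1 w1.
by rewrite !mxE exprz_unit_lipschitz.
Qed.

Lemma xi_toeplitz n z : toeplitz (xi n z).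
Proof. by exists (fun d => z ^ (- d)) => k l; rewrite mxE opprB. Qed.

Lemma xi_gram n z : S1 z -> xi n z = \matrix_(k, l) ((z ^+ k)^* * z ^+ l).
Proof.
move=> z1; apply/matrixP => k l; rewrite !mxE expfzDr ?unit_neq0 //.
by rewrite -conjC_exprz_unit // -!exprnP mulrC.
Qed.

Lemma xi_psd n z : S1 z -> psd (xi n z).
Proof. by move=> z1; rewrite xi_gram //; apply: psd_gram. Qed.

Lemma xi_entangled n k (t : 'I_k -> 'M[C]_n) (f : 'I_k -> C -> C) :
  (2 <= n)%N -> (forall j, toeplitz (t j) /\ psd (t j)) ->
  (forall j z, S1 z -> 0 <= f j z) ->
  ~ (forall z, S1 z -> xi n z = \sum_(j < k) f j z *: t j).
Proof.
move=> n_ge2 t_psd f_ge0 xi_sum.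
pose i0 : 'I_n := Ordinal (ltnW n_ge2); pose i1 : 'I_n := Ordinal n_ge2.
pose a j := t j i0 i0; pose b j := t j i0 i1.
have psd_ab j : psd2_toeplitz (a j) (b j).
  by case: (t_psd j); apply: psd_toeplitz_corner.
have xi_entry z r s : S1 z -> \sum_j f j z * t j r s = xi n z r s.
  by move=> z1; rewrite xi_sum // summxE; apply: eq_bigr => j _; rewrite mxE.
have sum_a z : S1 z -> \sum_j f j z * a j = 1.
  by move=> z1; rewrite xi_entry // mxE subrr expr0z.
have sum_b z : S1 z -> \sum_j f j z * b j = z.
  by move=> z1; rewrite xi_entry // mxE expr1z.
have b_eq z j : S1 z -> f j z != 0 -> b j = a j * z.
  move=> z1; have f_z_ge0 i : 0 <= f i z by apply: f_ge0.
  exact: psd2_mixture_unit z1 f_z_ge0 psd_ab (sum_a z z1) (sum_b z z1) j.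
have charged z : `|z| = 1 -> exists j, f j z * a j != 0.
  move=> z1; have [] : exists j, true && (0 < f j z * a j).
    apply: psumr_neq0P => [j _|].
      by rewrite mulr_ge0 ?f_ge0 ?(psd2_diag_ge0 (psd_ab j)).
    by rewrite sum_a //; apply/eqP; exact: oner_neq0.
  by move=> j /lt0r_neq0; exists j.
have [j [z [z' [z1 z'1 /eqP zz' cz cz']]]] := unit_circle_pigeonhole charged.
move: cz cz'; rewrite !mulf_eq0 !negb_or => /andP[fz a_neq0] /andP[fz' _].
by apply: zz'; apply: (mulfI a_neq0); rewrite -b_eq // -b_eq.
Qed.

End ToeplitzMatrices.

Theorem proposition7p6 (R : realType) (n : nat) (hn : (2 <= n)%N) :
  (* xi_n is a positive element of C(S^1)^(n) (x)_min C(S^1) *)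
  (mxcont_S1 (@xi R n) /\
   (forall z : R[i], S1 z -> toeplitz (xi n z)) /\
   (forall z : R[i], S1 z -> psd (xi n z))) /\
  (* ... which is entangled *)
  ~ (exists (k : nat) (t : 'I_k -> 'M[R[i]]_n) (f : 'I_k -> R[i] -> R[i]),
        (forall j, toeplitz (t j) /\ psd (t j)) /\
        (forall j, cont_S1 (f j) /\ forall z, S1 z -> 0 <= f j z) /\
        (forall z, S1 z -> xi n z = \sum_(j < k) f j z *: t j)).
Proof.
split.
  by split; [exact: xi_cont | split=> z z1; [exact: xi_toeplitz | exact: xi_psd]].
case=> k [t [f [t_psd [f_pos xi_sum]]]].
by apply: (xi_entangled hn t_psd _ xi_sum) => j; apply: (f_pos j).2.
Qed.
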